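(* Let $\varepsilon>0$, $\rho>0$, $T\in\mathbb{N}^*$, let $w$ be a real random variable and $\mathbf{a}=(a_t)_{0\le t\le T}\in\mathbb{R}^{T+1}$ with $a_0\ne0$. Let $K>0$ be such that $|a_t|\le(K\rho)^t|a_0|$ for all $t\in\{0,\ldots,T-1\}$, $|a_T+\varepsilon|\le(K\rho)^T|a_0|$ and $|a_T-\varepsilon|\le(K\rho)^T|a_0|$. Then \[\mathbb{P}(|f(\mathbf{a},\rho w)|\ge\varepsilon)\ge\mathbb{P}(|w|\ge2K),\] where $f(\mathbf{a},\rho w)=\sum_{t=0}^Ta_{T-t}(\rho w)^t$. *)

From HB Require Import structures.
From mathcomp Require Import all_boot all_order all_algebra.
From mathcomp Require Import all_classical all_reals all_analysis.
Set Implicit Arguments. Unset Strict Implicit. Unset Printing Implicit Defensive.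
Import Order.TTheory GRing.Theory Num.Theory.
Local Open Scope ring_scope.

Definition fpoly (R : realType) (T : nat) (a : nat -> R) (x : R) : R :=
  \sum_(t < T.+1) a (T - t)%N * x ^+ t.

From HB Require Import structures.
From mathcomp Require Import all_boot all_order all_algebra.
From mathcomp Require Import all_classical all_reals all_analysis.
From mathcomp Require Import ring lra.
Import Order.TTheory GRing.Theory Num.Theory.
Local Open Scope classical_set_scope.
Local Open Scope ring_scope.

(* Write y = rho w, c = K rho and f(a, y) = a_T + g(y).  Once |y| >= 2c the
   leading term a_0 y^T dominates the rest of g, because the bounds
   |a_t| <= c^t |a_0| turn the remainder into a geometric sum with ratio
   c / |y| <= 1/2; this gives |g(y)| >= 2 c^T |a_0|.  The two hypotheses on
   a_T +- eps say exactly that |a_T| + |eps| <= c^T |a_0|, so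
   |f(a, y)| >= |g(y)| - |a_T| >= c^T |a_0| + |eps| >= eps.  The event
   {|w| >= 2K} is therefore contained in {|f(a, rho w)| >= eps}. *)

Lemma sum_mixed_powers_le (R : realDomainType) (c u : R) (n : nat) :
  0 <= c -> 2 * c <= u ->
  \sum_(t < n) c ^+ (n - t) * u ^+ t.+1 <= u ^+ n.+1 - 2 * c ^+ n.+1.
Proof.
move=> c_ge0 cu; elim: n => [|n IHn]; first by rewrite big_ord0 !expr1 subr_ge0.
rewrite big_ord_recr /= subSnn expr1.
under eq_bigr => i _ do rewrite subSn ?(ltnW (ltn_ord i)) // exprS -mulrA.
rewrite -mulr_sumr.
have cS : c * \sum_(i < n) c ^+ (n - i) * u ^+ i.+1 <= c * (u ^+ n.+1 - 2 * c ^+ n.+1).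
  exact: ler_wpM2l.
have cu_n : 2 * c * u ^+ n.+1 <= u * u ^+ n.+1.
  by apply: ler_wpM2r => //; apply: exprn_ge0; lra.
rewrite [u ^+ n.+2]exprS [c ^+ n.+2]exprS; nra.
Qed.

Lemma norm_add_le_of_shifts (R : realDomainType) (b e M : R) :
  `|b + e| <= M -> `|b - e| <= M -> `|b| + `|e| <= M.
Proof.
rewrite !ler_norml => /andP[? ?] /andP[? ?].
have [b0|b0] := lerP 0 b; [rewrite (ger0_norm b0) | rewrite (ltr0_norm b0)];
  (have [e0|e0] := lerP 0 e; [rewrite (ger0_norm e0) | rewrite (ltr0_norm e0)]);
  lra.
Qed.

Lemma fpolyS (R : realType) (n : nat) (a : nat -> R) (y : R) :
  fpoly n.+1 a y = a n.+1 + \sum_(t < n.+1) a (n - t)%N * y ^+ t.+1.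
Proof. by rewrite /fpoly big_ord_recl subn0 expr0 mulr1. Qed.

Section FpolyLowerBound.
Variables (R : realType) (n : nat) (a : nat -> R) (c y : R).
Hypothesis c_ge0 : 0 <= c.
Hypothesis a_le : forall t : nat, (t < n.+1)%N -> `|a t| <= c ^+ t * `|a 0%N|.
Hypothesis cy : 2 * c <= `|y|.

Lemma norm_fpoly_tail_ge :
  2 * (c ^+ n.+1 * `|a 0%N|) <= `|\sum_(t < n.+1) a (n - t)%N * y ^+ t.+1|.
Proof.
rewrite big_ord_recr /= subnn addrC.
set r := \sum_(i < n) _.
have r_le : `|r| <= `|a 0%N| * (`|y| ^+ n.+1 - 2 * c ^+ n.+1).
  apply: (le_trans (ler_norm_sum _ _ _)).
  apply: (le_trans _ (ler_wpM2l (normr_ge0 _) (sum_mixed_powers_le _ _ _ n c_ge0 cy))).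
  rewrite mulr_sumr; apply: ler_sum => i _.
  rewrite normrM normrX mulrA; apply: ler_wpM2r; first exact: exprn_ge0.
  by rewrite mulrC a_le // ltnS leq_subr.
apply: le_trans (lerB_normD _ _).
rewrite normrM normrX; lra.
Qed.

Lemma norm_fpoly_ge (eps : R) :
  `|a n.+1 + eps| <= c ^+ n.+1 * `|a 0%N| ->
  `|a n.+1 - eps| <= c ^+ n.+1 * `|a 0%N| ->
  eps <= `|fpoly n.+1 a y|.
Proof.
move=> /norm_add_le_of_shifts /[apply] aT_le.
rewrite fpolyS addrC.
apply: le_trans (lerB_normD _ _).
have := norm_fpoly_tail_ge; have := ler_norm eps.
have : 0 <= c ^+ n.+1 * `|a 0%N| by rewrite mulr_ge0 ?exprn_ge0.
lra.
Qed.

End FpolyLowerBound.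

Lemma measurable_fpoly (R : realType) (T : nat) (a : nat -> R) :
  measurable_fun setT (fpoly T a).
Proof.
apply: measurable_sum => t.
apply: measurable_realfun.measurable_funM; first exact: measurable_cst.
exact: measurable_realfun.measurable_funX.
Qed.

Theorem mainTheorem16 (d : measure_display) (Omega : measurableType d)
  (R : realType) (P : probability Omega R) (w : {RV P >-> R})
  (eps rho K : R) (T : nat) (a : nat -> R) :
  0 < eps -> 0 < rho -> (0 < T)%N -> a 0%N != 0 -> 0 < K ->
  (forall t : nat, (t < T)%N -> `|a t| <= (K * rho) ^+ t * `|a 0%N|) ->
  `|a T + eps| <= (K * rho) ^+ T * `|a 0%N| ->
  `|a T - eps| <= (K * rho) ^+ T * `|a 0%N| ->
  (P [set x | (2 * K <= `|w x|)%R] <=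
   P [set x | (eps <= `|fpoly T a (rho * w x)|)%R])%E.
Proof.
move=> _ rho_gt0 T_gt0 _ K_gt0 a_le aT_eps aT_neps.
have mw : measurable_fun setT w := measurable_funPT w.
have mle (f g : Omega -> R) : measurable_fun setT f -> measurable_fun setT g ->
    measurable [set x | f x <= g x].
  by move=> mf mg; rewrite -[X in measurable X]setTI; exact: measurable_fun_le.
apply: le_measure; rewrite ?inE.
- by apply: mle; [exact: measurable_cst | exact: measurableT_comp].
- apply: mle; first exact: measurable_cst.
  apply: measurableT_comp => //; apply: measurableT_comp; first exact: measurable_fpoly.
  by apply: measurable_realfun.measurable_funM => //; exact: measurable_cst.
- case: T T_gt0 a_le aT_eps aT_neps => // n _ a_le aT_eps aT_neps x /= Kw.
  apply: (@norm_fpoly_ge _ n a (K * rho)) => //; first by rewrite mulr_ge0 ?ltW.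
  by rewrite normrM (gtr0_norm rho_gt0) mulrA mulrC ler_pM2l.
Qed.
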